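(* Let $(\Omega,\mathcal F)$ be a measurable space with $\Sigma\neq\emptyset$, and let $v:\mathcal F\to\mathbb R$ be a non-decreasing and continuous set function with $v(\emptyset)=0$. Then the following are equivalent. (a) $v$ is supermodular: $v(A)+v(B)\le v(A\cup B)+v(A\cap B)$ for all $A,B\in\mathcal F$. (b) For every $\mathcal I\in\Sigma$, $\mu_{v,\mathcal I}\in\mathcal C_{+,v}(\Omega)$, where $\mathcal C_{+,v}(\Omega)=\{\mu\in\mathcal M(\Omega)\mid\mu(\Omega)=v(\Omega),\ \mu(B)\ge v(B)\ \forall B\in\mathcal F\}$. (c) $v(A)=\inf_{\mathcal I\in\Sigma}\mu_{v,\mathcal I}(A)$ for all $A\in\mathcal F$. (d) For all $A,B\in\mathcal F$ with $B\subset A$, $v(B)=\inf_{\mu\in\mathcal C_{+,v}(A)}\mu(B)$, where $\mathcal C_{+,v}(A)=\{\mu\in\mathcal M(A)\mid \mu(A)=v(A),\ \mu(B')\ge v(B')\ \forall B'\in\mathcal F,\ B'\subset A\}$.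
   Context: $\Sigma$ denotes the set of all classes $\mathcal I\subset\mathcal F$ that are chains (totally ordered by inclusion), contain $\emptyset$ and $\Omega$, and generate $\mathcal F$ as a $\sigma$-algebra. $\mathcal M(A)$ is the set of finite measures on $(A,\mathcal F|_A)$. $v$ is non-decreasing if $v(A)\le v(B)$ for $A\subset B$. For $\mathcal I\in\Sigma$ let $\mathcal J$ be the algebra generated by $\mathcal I$, whose elements are the sets $\bigcup_{i=1}^n (C_i\cap D_i^c)$ with $C_1\supset D_1\supset\cdots\supset C_n\supset D_n$ in $\mathcal I$; define $\mu_{v,\mathcal I}(\bigcup_{i=1}^n (C_i\cap D_i^c))=\sum_{i=1}^n(v(C_i)-v(D_i))$. $v$ is continuous if for every $\mathcal I\in\Sigma$ this $\mu_{v,\mathcal I}$ is $\sigma$-additive on $\mathcal J$; it then extends uniquely to a measure on $\mathcal F$, again denoted $\mu_{v,\mathcal I}$ (the extremal measure). *)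

From HB Require Import structures.
From mathcomp Require Import all_boot all_order all_algebra.
From mathcomp Require Import all_classical all_reals all_analysis.
Set Implicit Arguments. Unset Strict Implicit. Unset Printing Implicit Defensive.
Import Order.TTheory GRing.Theory Num.Theory.
Import numFieldNormedType.Exports.
Local Open Scope classical_set_scope.
Local Open Scope ring_scope.

Section Defs.
Context {d : measure_display} {T : measurableType d} {R : realType}.

Definition inSigma (I : set (set T)) : Prop :=
  I `<=` measurable /\
  (forall C D, I C -> I D -> C `<=` D \/ D `<=` C) /\
  I set0 /\ I setT /\
  <<s I >> = @measurable d T.

Fixpoint desc_chain (l : seq (set T)) : Prop :=
  match l with
  | x :: ((y :: _) as t) => y `<=` x /\ desc_chain t
  | _ => True
  end.

(* s = [(C1,D1);...;(Cn,Dn)] with C1 ⊇ D1 ⊇ ... ⊇ Cn ⊇ Dn in I represents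
   the element A = ⋃ (C_i ∩ D_i^c) of the algebra J generated by I *)
Definition jrep (I : set (set T)) (A : set T) (s : seq (set T * set T)) : Prop :=
  let l := flatten [seq [:: p.1; p.2] | p <- s] in
  (forall X, X \in l -> I X) /\ desc_chain l /\
  A = \big[setU/set0]_(p <- s) (p.1 `&` ~` p.2).

(* mu_{v,I} of the set represented by s *)
Definition jval (v : set T -> R) (s : seq (set T * set T)) : R :=
  \sum_(p <- s) (v p.1 - v p.2).

(* v is continuous: for every I in Sigma, mu_{v,I} is sigma-additive on J *)
Definition continuous_sf (v : set T -> R) : Prop :=
  forall I, inSigma I ->
  forall (A : nat -> set T) (s : nat -> seq (set T * set T)) t,
    (forall k, jrep I (A k) (s k)) -> trivIset setT A ->
    jrep I (\bigcup_k A k) t ->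
    (fun n => \sum_(0 <= k < n) jval v (s k)) @ \oo --> jval v t.

Definition nondecreasing_sf (v : set T -> R) : Prop :=
  forall A B, measurable A -> measurable B -> A `<=` B -> v A <= v B.

Definition supermodular (v : set T -> R) : Prop :=
  forall A B, measurable A -> measurable B ->
    v A + v B <= v (A `|` B) + v (A `&` B).

(* mu is a finite measure on (A, F|_A) (only its values on measurable
   subsets of the measurable set A are relevant) *)
Definition finmeasure_on (A : set T) (mu : set T -> R) : Prop :=
  mu set0 = 0 /\
  (forall B, measurable B -> B `<=` A -> 0 <= mu B) /\
  (forall F : nat -> set T,
     (forall n, measurable (F n) /\ F n `<=` A) -> trivIset setT F ->
     (fun n => \sum_(0 <= i < n) mu (F i)) @ \oo --> mu (\bigcup_n F n)).

(* mu is the extremal measure mu_{v,I}: the (unique) finite measure on F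
   extending mu_{v,I} from the algebra J *)
Definition extremal (v : set T -> R) (I : set (set T)) (mu : set T -> R) : Prop :=
  finmeasure_on setT mu /\ forall A s, jrep I A s -> mu A = jval v s.

Definition Cplus (v : set T -> R) (A : set T) (mu : set T -> R) : Prop :=
  finmeasure_on A mu /\ mu A = v A /\
  (forall B, measurable B -> B `<=` A -> v B <= mu B).

End Defs.

Definition is_inf {R : realType} (S : set R) (x : R) : Prop :=
  (forall y, S y -> x <= y) /\ (forall z, (forall y, S y -> z <= y) -> z <= x).

From HB Require Import structures.
From mathcomp Require Import all_boot all_order all_algebra.
From mathcomp Require Import all_classical all_reals all_analysis.
From mathcomp Require Import lra.
Import Order.TTheory GRing.Theory Num.Theory.
Import numFieldNormedType.Exports.
Set Implicit Arguments. Unset Strict Implicit. Unset Printing Implicit Defensive.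
Local Open Scope classical_set_scope.
Local Open Scope ring_scope.

(* Extremal measures exist by Caratheodory extension from the semiring of
   differences C `\` D of members of the chain, and they agree with v on the chain.
   The core is (a) -> (b). Given the extremal measure mu of a chain I and a
   measurable B, refine I into the chain {C `&` B, B `|` C | C in I}, which passes
   through B; its extremal measure mu' yields the measure rho := mu' (. `&` B),
   with rho C = v (C `&` B) on I. By supermodularity C |-> v C - v (C `&` B) is
   nondecreasing along I, so mu - rho extends to a measure nu; uniqueness of
   measures on the pi-system I gives mu = nu + rho >= rho, whence
   mu B >= rho B = v B.
   For (b) -> (c) -> (d), the extremal measure of a chain through A and B (B in A)
   dominates v and takes the values v A and v B, so the infima are attained.
   For (d) -> (a), every mu in C_{+,v}(A `|` B) satisfies
   mu (A `&` B) = mu A + mu B - v (A `|` B) >= v A + v B - v (A `|` B). *)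

Section finmeasure_on.
Context {d : measure_display} {T : measurableType d} {R : realType}.
Variables (A : set T) (mu : set T -> R).
Hypothesis muA : finmeasure_on A mu.

Lemma finmeasure_on0 : mu set0 = 0.
Proof. by case: muA. Qed.

Lemma finmeasure_on_ge0 X : measurable X -> X `<=` A -> 0 <= mu X.
Proof. by have [_ [+ _]] := muA; apply. Qed.

Lemma finmeasure_on_sigma_additive (F : nat -> set T) :
  (forall n, measurable (F n) /\ F n `<=` A) -> trivIset setT F ->
  (fun n => \sum_(0 <= i < n) mu (F i)) @ \oo --> mu (\bigcup_n F n).
Proof. by have [_ [_ +]] := muA; apply. Qed.

Lemma finmeasure_onU X Y : measurable X -> measurable Y ->
  X `<=` A -> Y `<=` A -> X `&` Y = set0 -> mu (X `|` Y) = mu X + mu Y.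
Proof.
move=> mX mY XA YA XY0.
have F_meas n : measurable (bigcup2 X Y n) /\ bigcup2 X Y n `<=` A.
  by case: n => [|[|n]] /=; split.
have F_triv : trivIset setT (bigcup2 X Y) by rewrite -trivIset_bigcup2.
have := finmeasure_on_sigma_additive F_meas F_triv; rewrite bigcup2E => sumF.
suff sum2 : (fun n => \sum_(0 <= i < n) mu (bigcup2 X Y i)) @ \oo --> mu X + mu Y.
  exact: (cvg_unique _ sumF sum2).
apply: cvg_near_cst; near=> n.
have n2 : (2 <= n)%N by near: n; exists 2%N.
rewrite (big_cat_nat _ n2) //= big_nat_recr //= big_nat1 /=.
rewrite big1_seq ?addr0 // => -[|[|i]] /andP[_]; rewrite mem_index_iota //.
by rewrite finmeasure_on0.
Unshelve. all: by end_near.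
Qed.

Lemma finmeasure_onD X Y : measurable X -> measurable Y -> X `<=` Y -> Y `<=` A ->
  mu (Y `\` X) = mu Y - mu X.
Proof.
move=> mX mY XY YA; apply/eqP; rewrite eq_sym subr_eq addrC.
rewrite -finmeasure_onU ?setDUK ?setDIK //; first exact: measurableD.
  exact: subset_trans YA.
by move=> x [/YA].
Qed.

Lemma finmeasure_onUI X Y : measurable X -> measurable Y -> X `<=` A -> Y `<=` A ->
  mu X + mu Y = mu (X `|` Y) + mu (X `&` Y).
Proof.
move=> mX mY XA YA.
have XUY_A : X `|` Y `<=` A by rewrite subUset.
have diffE : (X `|` Y) `\` X = Y `\` (X `&` Y).
  apply/seteqP; split=> x [XYx nx].
    by case: XYx => // Yx; split=> // -[].
  by split; [right | move=> Xx; exact: nx].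
have := finmeasure_onD mX (measurableU _ _ mX mY) (@subsetUl _ X Y) XUY_A.
rewrite diffE finmeasure_onD //; first lra.
exact: measurableI.
Qed.

End finmeasure_on.

Section finmeasure_on_constructions.
Context {d : measure_display} {T : measurableType d} {R : realType}.

Lemma finmeasure_on_sub (A B : set T) (mu : set T -> R) :
  B `<=` A -> finmeasure_on A mu -> finmeasure_on B mu.
Proof.
move=> BA [mu0 [mu_ge0 mu_sigma]]; split=> //; split.
  by move=> X mX XB; apply: mu_ge0 => //; exact: subset_trans BA.
move=> F FB; apply: mu_sigma => n; have [mF FnB] := FB n.
by split=> //; exact: subset_trans BA.
Qed.

Lemma finmeasure_on_add (A : set T) (mu1 mu2 : set T -> R) :
  finmeasure_on A mu1 -> finmeasure_on A mu2 -> finmeasure_on A (mu1 \+ mu2).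
Proof.
move=> [mu1_0 [mu1_ge0 mu1_sigma]] [mu2_0 [mu2_ge0 mu2_sigma]].
split; first by rewrite /= mu1_0 mu2_0 addr0.
split; first by move=> X mX XA; rewrite addr_ge0 ?mu1_ge0 ?mu2_ge0.
move=> F FA Ftriv; under eq_fun do rewrite big_split /=.
exact: cvgD (mu1_sigma F FA Ftriv) (mu2_sigma F FA Ftriv).
Qed.

Lemma finmeasure_on_trace (B : set T) (mu : set T -> R) : measurable B ->
  finmeasure_on setT mu -> finmeasure_on setT (fun X => mu (X `&` B)).
Proof.
move=> mB [mu0 [mu_ge0 mu_sigma]]; split; first by rewrite set0I.
split; first by move=> X mX _; apply: mu_ge0 => //; exact: measurableI.
move=> F FT Ftriv; rewrite setI_bigcupl; apply: mu_sigma; last exact: trivIset_setIr.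
by move=> n; split=> //; apply: measurableI => //; case: (FT n).
Qed.

Lemma finmeasure_uniq (G : set (set T)) (mu1 mu2 : set T -> R) :
  G `<=` measurable -> setI_closed G -> G setT -> <<s G >> = measurable ->
  finmeasure_on setT mu1 -> finmeasure_on setT mu2 ->
  (forall C, G C -> mu1 C = mu2 C) -> forall X, measurable X -> mu1 X = mu2 X.
Proof.
move=> Gm GI GT Ggen mu1T mu2T mu12 X mX.
pose H := [set E : set T | measurable E /\ mu1 E = mu2 E].
suff: H X by case.
have H_dynkin : dynkin H.
  split; first by split=> //; exact: mu12.
  - move=> E [mE muE]; split; first exact: measurableC.
    by rewrite -setTD (finmeasure_onD mu1T) ?(finmeasure_onD mu2T) // muE mu12.
  - move=> F Ftriv HF; have mF n : measurable (F n) by case: (HF n).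
    split; first exact: bigcupT_measurable.
    have FT n : measurable (F n) /\ F n `<=` setT by [].
    have sum1 := finmeasure_on_sigma_additive mu1T FT Ftriv.
    have sum2 := finmeasure_on_sigma_additive mu2T FT Ftriv.
    have sumE : (fun n => \sum_(0 <= i < n) mu1 (F i)) =
                (fun n => \sum_(0 <= i < n) mu2 (F i)).
      by apply/funext => n; apply: eq_bigr => i _; case: (HF i).
    rewrite sumE in sum1; exact: cvg_unique _ sum1 sum2.
have GH : G `<=` H by move=> C GC; split; [exact: Gm | exact: mu12].
have sGH := lambda_system_subset GI ((dynkin_lambda_system H).1 H_dynkin) GH.
by apply: sGH; rewrite ?Ggen.
Qed.

End finmeasure_on_constructions.

Section chain_intervals.
Context {T : Type}.
Variable I : set (set T).
Hypothesis Itot : total_on I subset.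

Lemma chain_setU C D : I C -> I D -> I (C `|` D).
Proof. by move=> IC ID; case: (Itot IC ID) => CD; [rewrite setUidr | rewrite setUidl]. Qed.

Lemma chain_setI_closed : setI_closed I.
Proof. by move=> C D IC ID; case: (Itot IC ID) => CD; [rewrite setIidl | rewrite setIidr]. Qed.

Definition ivl : set (set T) :=
  [set X | exists C D, [/\ I C, I D, D `<=` C & X = C `\` D]].

Lemma ivl_setD C D : I C -> I D -> ivl (C `\` D).
Proof.
move=> IC ID; case: (Itot IC ID) => CD; last by exists C, D.
by exists C, C; split=> //; rewrite setDv setD_eq0.
Qed.

Lemma ivl_setI_closed : setI_closed ivl.
Proof.
move=> _ _ [C [D [IC ID DC ->]]] [C' [D' [IC' ID' DC' ->]]].
rewrite setDE setIACA -setCU -setDE.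
by apply: ivl_setD; [exact: chain_setI_closed | exact: chain_setU].
Qed.

Lemma ivl_semi_setD_closed : semi_setD_closed ivl.
Proof.
move=> _ _ [C [D [IC ID DC ->]]] [C' [D' [IC' ID' DC' ->]]].
exists [set C `\` (D `|` C'); (C `&` D') `\` D]; split.
- exact: finite_set2.
- move=> X [->|->]; apply: ivl_setD => //.
  + exact: chain_setU.
  + exact: chain_setI_closed.
- by rewrite bigcup_setU1 bigcup_set1 setDDr setDDl setIDAC setIDA.
- have disj : ~ ((C `\` (D `|` C')) `&` ((C `&` D') `\` D) !=set0).
    by move=> [x [[_ DC'x] [[_ /DC' C'x] _]]]; apply: DC'x; right.
  move=> X Y [->|->] [->|->] // XY; exfalso; apply: disj => //.
  by rewrite setIC.
Qed.

Lemma ivl_repr_uniq C D C' D' : I C -> I D -> I C' -> I D' -> D `<=` C -> D' `<=` C' ->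
  C `\` D = C' `\` D' -> (C = D /\ C' = D') \/ (C = C' /\ D = D').
Proof.
move=> IC ID IC' ID' DC DC' CD_E.
have [[x CDx]|CD0] := pselect (C `\` D !=set0); last first.
  left; split; apply/seteqP; split=> // y Cy; apply: contrapT => Dy; apply: CD0.
    by exists y.
  by exists y; rewrite CD_E.
have upper_eq (C1 D1 C2 D2 : set T) : I C1 -> I D2 -> D2 `<=` C2 ->
    C1 `\` D1 = C2 `\` D2 -> (C1 `\` D1) x -> C1 `<=` C2 -> C2 `<=` C1.
  move=> IC1 ID2 DC2 E12 CD1x C12 y C2y; apply: contrapT => C1y.
  case: (Itot ID2 IC1) => [D2C1|C1D2].
    have : (C2 `\` D2) y by split=> // /D2C1.
    by rewrite -E12 => -[].
  have [_ nD2x] : (C2 `\` D2) x by rewrite -E12.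
  by apply: nD2x; apply: C1D2; case: CD1x.
have CC' : C = C'.
  have CDx' : (C' `\` D') x by rewrite -CD_E.
  apply/seteqP; case: (Itot IC IC') => CC'; split=> //.
    exact: (upper_eq _ D _ D').
  exact: (upper_eq _ D' _ D).
subst C'; right; split=> //; apply/seteqP; split=> y Dy; apply: contrapT => nDy.
  have : (C `\` D') y by split=> //; exact: DC.
  by rewrite -CD_E => -[].
have : (C `\` D) y by split=> //; exact: DC'.
by rewrite CD_E => -[].
Qed.

End chain_intervals.

Section chain_functions.
Context {T : Type} {R : realType}.
Implicit Types (I : set (set T)) (f g : set T -> R).

Definition chain_nondecreasing I f :=
  forall C D, I C -> I D -> D `<=` C -> f D <= f C.

Definition chain_sigma_additive I f :=
  forall (Cs Ds : nat -> set T) C D,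
  (forall k, [/\ I (Cs k), I (Ds k) & Ds k `<=` Cs k]) -> I C -> I D -> D `<=` C ->
  trivIset setT (fun k => Cs k `\` Ds k) -> \bigcup_k (Cs k `\` Ds k) = C `\` D ->
  (fun n => \sum_(0 <= k < n) (f (Cs k) - f (Ds k))) @ \oo --> f C - f D.

Lemma chain_sigma_additiveB I f g :
  chain_sigma_additive I f -> chain_sigma_additive I g -> chain_sigma_additive I (f \- g).
Proof.
move=> fS gS Cs Ds C D CDs IC ID DC triv CDsE.
have -> : (f \- g) C - (f \- g) D = (f C - f D) - (g C - g D) by rewrite /=; lra.
have -> : (fun n => \sum_(0 <= k < n) ((f \- g) (Cs k) - (f \- g) (Ds k))) =
    (fun n => \sum_(0 <= k < n) (f (Cs k) - f (Ds k)) -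
              \sum_(0 <= k < n) (g (Cs k) - g (Ds k))).
  by apply/funext => n; rewrite -sumrB; apply: eq_bigr => k _ /=; lra.
exact: cvgB (fS _ _ _ _ CDs IC ID DC triv CDsE) (gS _ _ _ _ CDs IC ID DC triv CDsE).
Qed.

End chain_functions.

Lemma finmeasure_chain_sigma_additive {d} {T : measurableType d} {R : realType}
    (I : set (set T)) (mu : set T -> R) :
  I `<=` measurable -> finmeasure_on setT mu -> chain_sigma_additive I mu.
Proof.
move=> Im muT Cs Ds C D CDs IC ID DC triv CDsE.
have CDs_meas k : measurable (Cs k `\` Ds k) /\ Cs k `\` Ds k `<=` setT.
  by have [/Im mC /Im mD _] := CDs k; split=> //; exact: measurableD.
have -> : (fun n => \sum_(0 <= k < n) (mu (Cs k) - mu (Ds k))) =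
          (fun n => \sum_(0 <= k < n) mu (Cs k `\` Ds k)).
  apply/funext => n; apply: eq_bigr => k _.
  by have [/Im mC /Im mD DCk] := CDs k; rewrite (finmeasure_onD muT).
have := finmeasure_on_sigma_additive muT CDs_meas triv.
have mC := Im _ IC; have mD := Im _ ID.
by rewrite CDsE (finmeasure_onD muT).
Qed.

(* A copy of [T] carrying the semiring of intervals of [I] as its canonical structure. *)
Definition ivl_type {d} (T : measurableType d) (I : set (set T)) : Type := T.

Section chain_extension.
Context {d : measure_display} {T : measurableType d} {R : realType}.
Variable I : set (set T).
Hypotheses (Itot : total_on I subset) (I0 : I set0) (IT : I setT)
  (Igen : <<s I >> = measurable).
Variable f : set T -> R.
Hypotheses (f_nd : chain_nondecreasing I f) (f_sigma : chain_sigma_additive I f).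

Let U := ivl_type I.

Let ivl_repr (X : set T) (p : set T * set T) :=
  [/\ I p.1, I p.2, p.2 `<=` p.1 & X = p.1 `\` p.2].

Let repr (X : set T) : set T * set T := xget (set0, set0) (ivl_repr X).

Let reprP X : ivl I X -> ivl_repr X (repr X).
Proof. by move=> [C [D CD]]; apply: xgetPex; exists (C, D). Qed.

(* The [max] only matters off the intervals, where [repr] is junk. *)
Definition ivl_length (X : set U) : \bar R :=
  (Num.max (f (repr X).1 - f (repr X).2) 0)%:E.

Lemma ivl_lengthE C D : I C -> I D -> D `<=` C -> ivl_length (C `\` D) = (f C - f D)%:E.
Proof.
move=> IC ID DC; rewrite /ivl_length.
have [] := reprP (ivl_setD Itot IC ID); set p := repr _ => Ip1 Ip2 p21 CDE.
case: (ivl_repr_uniq Itot IC ID Ip1 Ip2 DC p21 CDE) => [[-> ->]|[<- <-]].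
  by rewrite !subrr maxxx.
by rewrite max_l // subr_ge0 f_nd.
Qed.

Lemma ivl_length0 : ivl_length set0 = 0.
Proof. by rewrite -(setDv (set0 : set T)) ivl_lengthE // subrr. Qed.

Lemma ivl_length_ge0 X : (0 <= ivl_length X)%E.
Proof. by rewrite lee_fin le_max lexx orbT. Qed.

Lemma ivl0 : ivl I set0.
Proof. by rewrite -(setDv (set0 : set T)); exact: ivl_setD. Qed.

HB.instance Definition _ := Pointed.on U.
HB.instance Definition _ := @isSemiRingOfSets.Build default_measure_display U
  (ivl I) ivl0 (ivl_setI_closed Itot) (ivl_semi_setD_closed Itot).

Lemma ivl_length_sigma_additive : semi_sigma_additive ivl_length.
Proof.
move=> F Fivl Ftriv UFivl.
pose Cs k := (repr (F k)).1; pose Ds k := (repr (F k)).2.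
have CDs k : [/\ I (Cs k), I (Ds k) & Ds k `<=` Cs k] by case: (reprP (Fivl k)).
have FE : F = (fun k => Cs k `\` Ds k).
  by apply/funext => k; case: (reprP (Fivl k)).
have [IC ID DC UFE] := reprP UFivl.
have -> : (fun n => \sum_(0 <= k < n) ivl_length (F k)) =
          (fun n => (\sum_(0 <= k < n) (f (Cs k) - f (Ds k)))%:E).
  apply/funext => n; rewrite -sumEFin; apply: eq_bigr => k _.
  by rewrite FE ivl_lengthE //; case: (CDs k).
rewrite UFE ivl_lengthE //; apply: cvg_EFin; first by near=> n.
by have := f_sigma CDs IC ID DC; rewrite -FE; apply.
Unshelve. all: by end_near.
Qed.

HB.instance Definition _ := isMeasure.Build _ _ _ ivl_length
  ivl_length0 ivl_length_ge0 ivl_length_sigma_additive.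

Let V := g_sigma_algebraType (@measurable _ U).
Let ext := measure_extension ivl_length.

Let measurableV (X : set T) : measurable X -> (@measurable _ V) X.
Proof.
rewrite -Igen => mX; apply: (sub_smallest2r _ _ mX); first exact: smallest_sigma_algebra.
by move=> C IC; rewrite -(setD0 C); exact: ivl_setD.
Qed.

Let extE C D : I C -> I D -> D `<=` C -> ext (C `\` D) = (f C - f D)%:E.
Proof.
move=> IC ID DC; rewrite /ext /measure_extension measurable_mu_extE.
  exact: ivl_lengthE.
exact: ivl_setD.
Qed.

Let ext_fin (X : set T) : measurable X -> ext X \is a fin_num.
Proof.
move=> mX; rewrite ge0_fin_numE ?measure_ge0 //.
apply: (@le_lt_trans _ _ (ext setT)); last by rewrite -(setD0 setT) extE // ltry.
apply: (le_measure ext); rewrite ?inE //; exact: measurableV.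
Qed.

Theorem chain_measure_extension : exists mu : set T -> R, finmeasure_on setT mu /\
  forall C D, I C -> I D -> D `<=` C -> mu (C `\` D) = f C - f D.
Proof.
exists (fun X => fine (ext X)); split; last by move=> C D IC ID DC; rewrite extE.
split; first exact: (congr1 fine (measure0 ext)).
split; first by move=> B mB _; apply: fine_ge0; exact: measure_ge0.
move=> F FT Ftriv; have mF n : measurable (F n) by case: (FT n).
have mUF : measurable (\bigcup_n F n) by exact: bigcupT_measurable.
have sum_ext : (fun n => \sum_(0 <= i < n) ext (F i)) @ \oo -->
               (fine (ext (\bigcup_n F n)))%:E.
  rewrite fineK ?ext_fin //.
  exact: measure_sigma_additive (fun n => measurableV (mF n)) Ftriv.
have fine_sumE : fine \o (fun n => \sum_(0 <= i < n) ext (F i)) =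
                 (fun n => \sum_(0 <= i < n) fine (ext (F i))).
  by apply/funext => n /=; rewrite sum_fine // => i _; exact: ext_fin.
by rewrite -fine_sumE; apply: fine_cvg.
Qed.

End chain_extension.

Section interval_algebra.
Context {d : measure_display} {T : measurableType d} {R : realType}.
Implicit Types (I : set (set T)) (v mu : set T -> R) (s : seq (set T * set T)).

Let endpoints s := flatten [seq [:: p.1; p.2] | p <- s].
Let jset s := \big[setU/set0]_(p <- s) (p.1 `&` ~` p.2).

Let endpoints_cons p s : endpoints (p :: s) = p.1 :: p.2 :: endpoints s.
Proof. by []. Qed.

Let jset_cons p s : jset (p :: s) = (p.1 `&` ~` p.2) `|` jset s.
Proof. by rewrite /jset big_cons. Qed.

Let desc_chain_behead (X : set T) l : desc_chain (X :: l) -> desc_chain l.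
Proof. by case: l => // Y l []. Qed.

Let jset_sub s X : desc_chain (X :: endpoints s) -> jset s `<=` X.
Proof.
elim: s X => [|[C D] s IHs] X; first by rewrite /jset big_nil => _; exact: sub0set.
rewrite endpoints_cons jset_cons => -[CX [DC chain_s]].
rewrite subUset; split; first by move=> x [/CX].
exact: subset_trans (subset_trans (IHs D chain_s) DC) CX.
Qed.

Let jset_measurable s : (forall X, X \in endpoints s -> measurable X) -> measurable (jset s).
Proof.
elim: s => [|[C D] s IHs] ms; first by rewrite /jset big_nil.
have mC : measurable C by apply: ms; rewrite endpoints_cons inE eqxx.
have mD : measurable D by apply: ms; rewrite endpoints_cons !inE eqxx orbT.
rewrite jset_cons; apply: measurableU.
  by apply: measurableI => //; exact: measurableC.
by apply: IHs => X Xs; apply: ms; rewrite endpoints_cons !inE Xs !orbT.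
Qed.

Lemma jrep1 I C D : I C -> I D -> D `<=` C -> jrep I (C `\` D) [:: (C, D)].
Proof.
move=> IC ID DC; split; last split=> //.
  by move=> X; rewrite /= !inE => /orP[] /eqP ->.
by rewrite big_seq1 setDE.
Qed.

Lemma jval1 v C D : jval v [:: (C, D)] = v C - v D.
Proof. by rewrite /jval big_seq1. Qed.

Lemma extremal_of_intervals v I mu : I `<=` measurable -> finmeasure_on setT mu ->
  (forall C D, I C -> I D -> D `<=` C -> mu (C `\` D) = v C - v D) -> extremal v I mu.
Proof.
move=> Im muT muI; split=> // + s; elim: s => [|[C D] s IHs] A [Is [chain_s ->]].
  by rewrite big_nil /jval big_nil (finmeasure_on0 muT).
rewrite big_cons -/(jset s) /jval big_cons -/(jval v s) /=.
have IC : I C by apply: Is; rewrite inE eqxx.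
have ID : I D by apply: Is; rewrite !inE eqxx orbT.
have Is' X : X \in endpoints s -> I X by move=> Xs; apply: Is; rewrite !inE Xs !orbT.
have [DC chain_Ds] : D `<=` C /\ desc_chain (D :: endpoints s) by case: chain_s.
have mC := Im _ IC; have mD := Im _ ID.
rewrite (finmeasure_onU muT) //.
- rewrite -setDE muI // (IHs (jset s)) //.
  by split; [exact: Is' | split; [exact: desc_chain_behead chain_Ds |]].
- by apply: measurableI => //; exact: measurableC.
- by apply: jset_measurable => X /Is' /Im.
- by apply/seteqP; split=> // x [[_ nDx] /(jset_sub chain_Ds)].
Qed.

End interval_algebra.

Section extremal_measures.
Context {d : measure_display} {T : measurableType d} {R : realType}.
Implicit Types (I : set (set T)) (v mu : set T -> R).

Lemma continuous_sf_chain_sigma_additive v I :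
  continuous_sf v -> inSigma I -> chain_sigma_additive I v.
Proof.
move=> v_cont I_Sigma Cs Ds C D CDs IC ID DC triv CDsE.
have CDs_rep k : jrep I (Cs k `\` Ds k) [:: (Cs k, Ds k)].
  by have [ICk IDk DCk] := CDs k; exact: jrep1.
have := v_cont I I_Sigma _ _ [:: (C, D)] CDs_rep triv.
rewrite CDsE jval1 => /(_ (jrep1 IC ID DC)).
by under eq_fun do under eq_bigr do rewrite jval1.
Qed.

Lemma extremal_exists v I : nondecreasing_sf v -> continuous_sf v -> inSigma I ->
  exists mu, extremal v I mu.
Proof.
move=> v_nd v_cont I_Sigma; have [Im [Itot [I0 [IT Igen]]]] := I_Sigma.
have v_chain_nd : chain_nondecreasing I v.
  by move=> C D IC ID; apply: v_nd; exact: Im.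
have [mu [muT muI]] := chain_measure_extension Itot I0 IT Igen v_chain_nd
  (continuous_sf_chain_sigma_additive v_cont I_Sigma).
by exists mu; exact: extremal_of_intervals.
Qed.

Lemma extremal_on_chain v I mu C : v set0 = 0 -> I set0 -> extremal v I mu -> I C ->
  mu C = v C.
Proof.
move=> v0 I0 [_ muJ] IC.
by have := muJ _ _ (jrep1 IC I0 (sub0set C)); rewrite setD0 jval1 v0 subr0.
Qed.

End extremal_measures.

Section refine_chain.
Context {d : measure_display} {T : measurableType d}.
Implicit Types (I : set (set T)) (A B C : set T).

Definition refine_chain I B : set (set T) :=
  [set X | exists2 C, I C & X = C `&` B \/ X = B `|` C].

Lemma refine_chainI I B C : I C -> refine_chain I B (C `&` B).
Proof. by exists C => //; left. Qed.

Lemma refine_chain_sup I B A : I A -> B `<=` A -> refine_chain I B A.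
Proof. by move=> IA BA; exists A => //; right; rewrite setUidr. Qed.

Lemma refine_chain_self I B : I setT -> refine_chain I B B.
Proof. by move=> IT; have := refine_chainI B IT; rewrite setTI. Qed.

Lemma refine_chain_total I B : total_on I subset -> total_on (refine_chain I B) subset.
Proof.
move=> Itot _ _ [C IC [->|->]] [C' IC' [->|->]].
- by case: (Itot _ _ IC IC') => CC'; [left | right]; exact: setSI.
- by left => x [_ Bx]; left.
- by right => x [_ Bx]; left.
- by case: (Itot _ _ IC IC') => CC'; [left | right]; exact: setUS.
Qed.

Lemma refine_chain_generates I B : I `<=` measurable -> <<s I >> = measurable ->
  I setT -> measurable B -> <<s refine_chain I B >> = measurable.
Proof.
move=> Im Igen IT mB; have mK : refine_chain I B `<=` measurable.
  by move=> _ [C /Im mC [->|->]]; [exact: measurableI | exact: measurableU].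
apply/seteqP; split.
  by apply: smallest_sub; [exact: sigma_algebra_measurable | exact: mK].
rewrite -Igen; apply: smallest_sub; first exact: smallest_sigma_algebra.
move=> C IC.
suff : (@measurable _ (g_sigma_algebraType (refine_chain I B)))
    ((C `&` B) `|` ((B `|` C) `\` B)) by rewrite setDUl setDv set0U setUIDK.
apply: measurableU; first by apply: sub_sigma_algebra; exact: refine_chainI.
apply: measurableD; apply: sub_sigma_algebra; first by exists C => //; right.
exact: refine_chain_self.
Qed.

Lemma inSigma_refine_chain I B : inSigma I -> measurable B -> inSigma (refine_chain I B).
Proof.
move=> [Im [Itot [I0 [IT Igen]]]] mB; split; last split; last split; last split.
- by move=> _ [C /Im mC [->|->]]; [exact: measurableI | exact: measurableU].
- exact: refine_chain_total.
- by have := refine_chainI B I0; rewrite set0I.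
- by exists setT => //; right; rewrite setUT.
- exact: refine_chain_generates.
Qed.

Lemma inSigma_through A B : (exists I, inSigma I) -> measurable A -> measurable B ->
  B `<=` A -> exists2 I, inSigma I & I A /\ I B.
Proof.
move=> [I I_Sigma] mA mB BA; have [_ [_ [_ [IT _]]]] := I_Sigma.
have IA_Sigma := inSigma_refine_chain I_Sigma mA.
exists (refine_chain (refine_chain I A) B); first exact: inSigma_refine_chain.
split; first by apply: refine_chain_sup => //; exact: refine_chain_self.
by apply: refine_chain_self; have [_ [_ [_ []]]] := IA_Sigma.
Qed.

End refine_chain.

Lemma is_inf_attained {R : realType} (S : set R) x :
  S x -> (forall y, S y -> x <= y) -> is_inf S x.
Proof. by move=> Sx x_lb; split=> // z; apply. Qed.

Section supermodular.
Context {d : measure_display} {T : measurableType d} {R : realType}.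
Implicit Types (I : set (set T)) (mu rho : set T -> R).

Lemma finmeasure_le_chain_nondecreasing I mu rho : inSigma I ->
  finmeasure_on setT mu -> finmeasure_on setT rho -> chain_nondecreasing I (mu \- rho) ->
  forall X, measurable X -> rho X <= mu X.
Proof.
move=> [Im [Itot [I0 [IT Igen]]]] muT rhoT gap_nd X mX.
have gap_sigma : chain_sigma_additive I (mu \- rho).
  by apply: chain_sigma_additiveB; exact: finmeasure_chain_sigma_additive.
have [nu [nuT nuI]] := chain_measure_extension Itot I0 IT Igen gap_nd gap_sigma.
have muE : forall Y, measurable Y -> mu Y = (nu \+ rho) Y.
  apply: (finmeasure_uniq Im (chain_setI_closed Itot) IT Igen muT).
    exact: finmeasure_on_add.
  move=> C IC; have := nuI C set0 IC I0 (sub0set C).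
  by rewrite setD0 /= (finmeasure_on0 muT) (finmeasure_on0 rhoT) => ->; lra.
by rewrite muE //= lerDr (finmeasure_on_ge0 nuT).
Qed.

Variable v : set T -> R.
Hypotheses (v_nd : nondecreasing_sf v) (v_cont : continuous_sf v) (v0 : v set0 = 0).

Lemma supermodular_setI_gap_le B C D : supermodular v ->
  measurable B -> measurable C -> measurable D -> D `<=` C ->
  v D - v (D `&` B) <= v C - v (C `&` B).
Proof.
move=> v_sm mB mC mD DC.
have := v_sm _ _ (measurableI _ _ mC mB) mD.
have -> : C `&` B `&` D = D `&` B by rewrite setIAC (setIidr DC).
have : v (C `&` B `|` D) <= v C.
  apply: v_nd => //; last by rewrite subUset; split=> // x [].
  exact: measurableU (measurableI _ _ mC mB) mD.
lra.
Qed.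

Lemma supermodular_extremal_ge I mu B : supermodular v -> inSigma I -> extremal v I mu ->
  measurable B -> v B <= mu B.
Proof.
move=> v_sm I_Sigma mu_ext mB; have [Im [_ [I0 [IT _]]]] := I_Sigma.
have K_Sigma := inSigma_refine_chain I_Sigma mB.
have [muK muK_ext] := extremal_exists v_nd v_cont K_Sigma.
have [_ [_ [K0 _]]] := K_Sigma.
have muK_v C : refine_chain I B C -> muK C = v C by exact: extremal_on_chain.
have mu_v C : I C -> mu C = v C by exact: extremal_on_chain.
pose rho X := muK (X `&` B).
have -> : v B = rho B by rewrite /rho setIid muK_v //; exact: refine_chain_self.
apply: (finmeasure_le_chain_nondecreasing (rho := rho) I_Sigma mu_ext.1) => //.
  exact: finmeasure_on_trace mB muK_ext.1.
move=> C D IC ID DC; rewrite /rho /= !mu_v // !muK_v; [|exact: refine_chainI..].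
by apply: supermodular_setI_gap_le => //; exact: Im.
Qed.

Lemma supermodular_Cplus : supermodular v ->
  forall I mu, inSigma I -> extremal v I mu -> Cplus v setT mu.
Proof.
move=> v_sm I mu I_Sigma mu_ext; have [_ [_ [I0 [IT _]]]] := I_Sigma.
split; first exact: mu_ext.1.
split; first exact: extremal_on_chain v0 I0 mu_ext IT.
by move=> B mB _; exact: supermodular_extremal_ge mu_ext mB.
Qed.

Hypothesis Sigma_ne : exists I, inSigma I.

Lemma Cplus_extremal_inf :
  (forall I mu, inSigma I -> extremal v I mu -> Cplus v setT mu) ->
  forall A, measurable A ->
  is_inf [set x | exists I mu, inSigma I /\ extremal v I mu /\ x = mu A] (v A).
Proof.
move=> extremal_Cplus A mA.
have [I I_Sigma [IA _]] := inSigma_through Sigma_ne mA mA (@subset_refl _ A).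
have [_ [_ [I0 _]]] := I_Sigma.
have [mu mu_ext] := extremal_exists v_nd v_cont I_Sigma.
apply: is_inf_attained; first by exists I, mu; rewrite (extremal_on_chain v0 I0 mu_ext).
move=> _ [I' [mu' [I'_Sigma [mu'_ext ->]]]].
by have [_ [_]] := extremal_Cplus _ _ I'_Sigma mu'_ext; apply.
Qed.

Lemma extremal_inf_Cplus_inf :
  (forall A, measurable A ->
    is_inf [set x | exists I mu, inSigma I /\ extremal v I mu /\ x = mu A] (v A)) ->
  forall A B, measurable A -> measurable B -> B `<=` A ->
  is_inf [set x | exists mu, Cplus v A mu /\ x = mu B] (v B).
Proof.
move=> extremal_inf A B mA mB BA.
have extremal_ge I mu X : inSigma I -> extremal v I mu -> measurable X -> v X <= mu X.
  by move=> I_Sigma mu_ext mX; apply: (extremal_inf X mX).1; exists I, mu.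
apply: is_inf_attained; last by move=> _ [mu [[_ [_ mu_ge]] ->]]; exact: mu_ge.
have [I I_Sigma [IA IB]] := inSigma_through Sigma_ne mA mB BA.
have [_ [_ [I0 _]]] := I_Sigma.
have [mu mu_ext] := extremal_exists v_nd v_cont I_Sigma.
exists mu; split; last by rewrite (extremal_on_chain v0 I0 mu_ext).
split; first exact: finmeasure_on_sub mu_ext.1.
split; first exact: extremal_on_chain v0 I0 mu_ext IA.
by move=> X mX _; exact: extremal_ge mu_ext mX.
Qed.

Lemma Cplus_inf_supermodular :
  (forall A B, measurable A -> measurable B -> B `<=` A ->
    is_inf [set x | exists mu, Cplus v A mu /\ x = mu B] (v B)) ->
  supermodular v.
Proof.
move=> Cplus_inf A B mA mB.
have AB_A : A `&` B `<=` A `|` B by move=> x [Ax _]; left.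
have [_ glb] := Cplus_inf _ _ (measurableU _ _ mA mB) (measurableI _ _ mA mB) AB_A.
suff : v A + v B - v (A `|` B) <= v (A `&` B) by lra.
apply: glb => _ [mu [[muAB [muE mu_ge]] ->]].
have := finmeasure_onUI muAB mA mB (@subsetUl _ A B) (@subsetUr _ A B).
have := mu_ge _ mA (@subsetUl _ A B); have := mu_ge _ mB (@subsetUr _ A B).
lra.
Qed.

End supermodular.

Theorem corollary8 (d : measure_display) (T : measurableType d) (R : realType)
  (v : set T -> R) :
  (exists I : set (set T), inSigma I) ->
  nondecreasing_sf v -> continuous_sf v -> v set0 = 0 ->
  [<-> supermodular v;
       forall I mu, inSigma I -> extremal v I mu -> Cplus v setT mu;
       forall A, measurable A ->
         is_inf [set x | exists I mu, inSigma I /\ extremal v I mu /\ x = mu A] (v A);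
       forall A B, measurable A -> measurable B -> B `<=` A ->
         is_inf [set x | exists mu, Cplus v A mu /\ x = mu B] (v B)].
Proof.
move=> Sigma_ne v_nd v_cont v0; tfae.
- exact: supermodular_Cplus.
- exact: Cplus_extremal_inf.
- exact: extremal_inf_Cplus_inf.
- exact: Cplus_inf_supermodular.
Qed.
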